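(* Let $G=(V,E)$ be a finite connected undirected unweighted graph, let $\lambda\in[0,1]$, and consider the $\lambda$-mixed Moran process on $G$ with mutant fitness $r=1$. Then for every $S\subseteq V$, \[\mathrm{fp}^{\lambda,1}_G(S)=\sum_{u\in S}\mathrm{fp}^{\lambda,1}_G(\{u\}).\]
   Context: The $\lambda$-mixed Moran process on a connected graph $G=(V,E)$ with $n=|V|\ge 2$ vertices: each vertex hosts either a resident (fitness $1$) or a mutant (fitness $r>0$); the state (configuration) is the set $S_t\subseteq V$ of mutant vertices. $N(u)$ is the neighbor set of $u$, $\deg_u=|N(u)|$. At each discrete step, independently: with probability $\lambda$ a Birth-death (Bd) step occurs, in which a vertex $u$ is chosen with probability proportional to its fitness (among all $n$ vertices), then a uniformly random neighbor $v\in N(u)$ is replaced by an offspring of the type of $u$; with probability $1-\lambda$ a death-Birth (dB) step occurs, in which a vertex $v$ is chosen uniformly at random to die, then a neighbor $u\in N(v)$ is chosen with probability proportional to fitness (among $N(v)$) and $v$ takes the type of $u$. The process is absorbed when $S_t=\emptyset$ (extinction) or $S_t=V$ (fixation). $\mathrm{fp}^{\lambda,r}_G(S)$ denotes the probability that the process started from $S_0=S$ reaches $S_t=V$ at some time. *)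

From HB Require Import structures.
From mathcomp Require Import all_boot all_order all_algebra.
From mathcomp Require Import reals topology normedtype sequences.
Set Implicit Arguments. Unset Strict Implicit. Unset Printing Implicit Defensive.
Import Order.TTheory GRing.Theory Num.Theory numFieldNormedType.Exports.
Local Open Scope ring_scope.

(* A graph is a relation adj on a finite vertex type V (assumed symmetric,
   irreflexive and connected in the theorem).  States are sets S : {set V}
   of mutant vertices. *)

Section Moran.
Variables (R : realType) (V : finType) (adj : rel V).

Definition nbr (u : V) : {set V} := [set v | adj u v].
Definition deg (u : V) : nat := #|nbr u|.

Definition fit (r : R) (S : {set V}) (x : V) : R := if x \in S then r else 1.

Definition repl (S : {set V}) (u v : V) : {set V} :=
  if u \in S then v |: S else S :\ v.

(* Birth-death step: u chosen prop. to fitness among all n vertices,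
   v uniform among N(u), v replaced by offspring of u. *)
Definition bd_prob (r : R) (S T : {set V}) : R :=
  \sum_(u : V) \sum_(v in nbr u)
     (fit r S u / (\sum_(x : V) fit r S x)) * (deg u)%:R^-1
     * (repl S u v == T)%:R.

(* death-Birth step: v uniform among all n vertices dies, u chosen among
   N(v) prop. to fitness, v takes the type of u. *)
Definition db_prob (r : R) (S T : {set V}) : R :=
  \sum_(v : V) \sum_(u in nbr v)
     (#|V|%:R)^-1 * (fit r S u / (\sum_(w in nbr v) fit r S w))
     * (repl S u v == T)%:R.

Definition trans (lam r : R) (S T : {set V}) : R :=
  lam * bd_prob r S T + (1 - lam) * db_prob r S T.

Fixpoint hit (lam r : R) (n : nat) (S : {set V}) : R :=
  if S == [set: V] then 1 else
  match n with
  | 0 => 0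
  | n'.+1 => \sum_(T : {set V}) trans lam r S T * hit lam r n' T
  end.

(* fixation probability: probability of reaching S_t = V at some time,
   i.e. the limit of the (nondecreasing, bounded) hitting probabilities *)
Definition fp (lam r : R) (S : {set V}) : R := limn (fun n => hit lam r n S).

End Moran.

(* Reading k steps backwards, v's type at
   time k is that of its ancestor, and the ancestors of a set B of vertices
   move as coalescing random walks ([merge (u, v)] moves the walker at v to u).
   Hence P(S_k = V) is the probability that the ancestors of V lie in S, and
   P(S_k = V) - sum_(u in S) P({u}_k = V) is the probability that they lie in S
   without having coalesced to a single vertex.  On a connected graph any two
   walkers can be driven together along a shortest path, so at least two
   walkers survive |V|^2 steps with probability at most 1 - |V|^(-2|V|^2); this
   excess therefore vanishes geometrically, and fixation probabilities, the
   limits in k, are additive. *)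

From mathcomp Require Import boolp classical_sets.
From mathcomp Require Import all_boot all_order all_algebra.
From mathcomp Require Import reals topology normedtype sequences.
From mathcomp Require Import ring lra zify.
Import Order.TTheory GRing.Theory Num.Theory numFieldNormedType.Exports.
Local Open Scope ring_scope.
Set Implicit Arguments. Unset Strict Implicit. Unset Printing Implicit Defensive.

Lemma limn_sum_add_vanishing (R : realType) (I : finType) (P : pred I)
    (a d : R ^nat) (b : I -> R ^nat) :
  (forall n, a n = d n + \sum_(i | P i) b i n) -> (d @ \oo --> 0)%classic ->
  (forall i, cvgn (b i)) -> limn a = \sum_(i | P i) limn (b i).
Proof.
move=> a_split d_cvg0 b_cvg; apply: cvg_lim => //.
rewrite (funext a_split) -[X in (_ --> X)%classic]add0r; apply: cvgD d_cvg0 _.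
by apply: (cvg_big add_continuous) => // i _.
Qed.

Section CoalescingDual.
Variables (R : realType) (V : finType) (q : V * V -> R).
Hypotheses (q_ge0 : forall p, 0 <= q p) (q_sum1 : \sum_p q p = 1).

Definition merge (p : V * V) (x : V) : V := if x == p.2 then p.1 else x.

Definition dual (f : {set V} -> R) (B : {set V}) : R :=
  \sum_p q p * f (merge p @: B).

Lemma iter_dual_cst k a (B : {set V}) : iter k dual (fun=> a) B = a.
Proof.
elim: k B => [|k IH] B //=.
rewrite /dual (eq_bigr (fun p => q p * a)) => [|p _]; last by rewrite IH.
by rewrite -mulr_suml q_sum1 mul1r.
Qed.

Lemma iter_dualD k f g (B : {set V}) :
  iter k dual (fun C => f C + g C) B = iter k dual f B + iter k dual g B.
Proof.
elim: k B => [|k IH] B //=.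
by rewrite /dual -big_split; apply: eq_bigr => p _; rewrite IH mulrDr.
Qed.

Lemma iter_dualZ k a f (B : {set V}) :
  iter k dual (fun C => a * f C) B = a * iter k dual f B.
Proof.
elim: k B => [|k IH] B //=.
by rewrite /dual mulr_sumr; apply: eq_bigr => p _; rewrite IH mulrCA.
Qed.

Lemma iter_dual_sum k (I : Type) (r : seq I) (P : pred I) F (B : {set V}) :
  iter k dual (fun C => \sum_(i <- r | P i) F i C) B
  = \sum_(i <- r | P i) iter k dual (F i) B.
Proof.
elim: r => [|i r IH].
  by under eq_fun do rewrite big_nil -(mul0r 0); rewrite iter_dualZ !mul0r big_nil.
rewrite big_cons; under eq_fun do rewrite big_cons.
by case: (P i); rewrite ?iter_dualD IH.
Qed.

Lemma iter_dual_le k f g : (forall B, f B <= g B) ->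
  forall B, iter k dual f B <= iter k dual g B.
Proof.
move=> fg; elim: k => [|k IH] B //=.
by apply: ler_sum => p _; apply: ler_wpM2l.
Qed.

Lemma iter_dual_ge0 k f : (forall B, 0 <= f B) -> forall B, 0 <= iter k dual f B.
Proof.
move=> f_ge0; elim: k => [|k IH] B //=.
by apply: sumr_ge0 => p _; exact: mulr_ge0.
Qed.

Lemma iter_dual_bound k f : (forall B, 0 <= f B <= 1) ->
  forall B, 0 <= iter k dual f B <= 1.
Proof.
move=> f01 B; rewrite -(iter_dual_cst k 1 B) iter_dual_ge0 ?iter_dual_le //.
  by move=> C; case/andP: (f01 C).
by move=> C; case/andP: (f01 C).
Qed.

Lemma iter_dual_eq_nonempty k f g : (forall B, B != set0 -> f B = g B) ->
  forall B, B != set0 -> iter k dual f B = iter k dual g B.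
Proof.
move=> fg; elim: k => [|k IH] B B0 /=; first exact: fg.
by apply: eq_bigr => p _; rewrite IH // imset_eq0.
Qed.

Lemma bool01 (b : bool) : 0 <= (b%:R : R) <= 1.
Proof. by case: b; rewrite ?ler01 ?lexx. Qed.

Definition many (B : {set V}) : R := (1 < #|B|)%N%:R.

Definition uncoal k := iter k dual many.

Lemma uncoal_bound k B : 0 <= uncoal k B <= 1.
Proof. exact: iter_dual_bound (fun C => bool01 _) B. Qed.

Lemma dual_many_le B : dual many B <= many B.
Proof.
rewrite -[leRHS]mul1r -q_sum1 mulr_suml; apply: ler_sum => p _.
rewrite ler_wpM2l // /many ler_nat; case: (leqP #|B| 1) => [B_le1|_].
  by rewrite ltnNge (leq_trans (leq_imset_card _ _) B_le1).
exact: leq_b1.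
Qed.

Lemma uncoal_anti m k B : (m <= k)%N -> uncoal k B <= uncoal m B.
Proof.
move=> /subnK <-; elim: (k - m)%N => [|d IH] //; apply: le_trans IH.
by rewrite addSn /uncoal iterSr; apply: (iter_dual_le _ dual_many_le).
Qed.

Lemma subset_indicator_split (S B : {set V}) : B != set0 ->
  (B \subset S)%:R = ((B \subset S) && (1 < #|B|)%N)%:R
                      + \sum_(u in S) (B \subset [set u])%:R :> R.
Proof.
move=> B0; case: (leqP #|B| 1) => [B_le1|B_gt1].
  have /cards1P [y ->] : #|B| == 1%N by rewrite eqn_leq B_le1 card_gt0.
  rewrite andbF add0r sub1set; under eq_bigr do rewrite sub1set in_set1.
  have [yS|yNS] := boolP (y \in S).
    rewrite (bigD1 y) //= eqxx big1 ?addr0 // => u /andP[_ uy].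
    by rewrite eq_sym (negbTE uy).
  by rewrite big1 // => u uS; case: eqP => // yu; rewrite yu uS in yNS.
rewrite andbT big1 ?addr0 // => u _; case: (boolP (B \subset _)) => // /subset_leq_card.
by rewrite cards1 leqNgt B_gt1.
Qed.

Lemma iter_dual_subset_excess k (S B : {set V}) : B != set0 ->
  0 <= iter k dual (fun C => (C \subset S)%:R) B
       - \sum_(u in S) iter k dual (fun C => (C \subset [set u])%:R) B
    <= uncoal k B.
Proof.
move=> B0; rewrite (iter_dual_eq_nonempty k (subset_indicator_split S) B0).
rewrite iter_dualD iter_dual_sum addrK; apply/andP; split.
  by apply: iter_dual_ge0 => C; exact: ler0n.
by apply: iter_dual_le => C; rewrite /many ler_nat; case: (C \subset S).
Qed.

(* Peeling off the last dual step rather than the first one: this matches the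
   forward recursion [hit_step]. *)
Lemma iter_dual_subset_step k (S B : {set V}) :
  iter k.+1 dual (fun C => (C \subset S)%:R) B
  = \sum_p q p * iter k dual (fun C => (C \subset merge p @^-1: S)%:R) B.
Proof.
rewrite iterSr; under eq_bigr do rewrite -iter_dualZ; rewrite -iter_dual_sum.
congr (iter _ _ _ _); apply/funext => C.
by rewrite /dual; under eq_bigr do rewrite sub_imset_pre.
Qed.

End CoalescingDual.

Section MergePaths.
Variables (V : finType) (adj : rel V).
Hypotheses (adj_sym : symmetric adj) (adj_conn : forall x y : V, connect adj x y).

Definition edge (p : V * V) : bool := adj p.1 p.2.

Definition merges (s : seq (V * V)) : V -> V := foldr (fun p f => f \o merge p) id s.

Lemma imset_merges_cons p s (B : {set V}) :
  merges (p :: s) @: B = merges s @: (merge p @: B).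
Proof. by rewrite -imset_comp. Qed.

Lemma imset_merges_cat s1 s2 (B : {set V}) :
  merges (s1 ++ s2) @: B = merges s2 @: (merges s1 @: B).
Proof.
by elim: s1 B => [|p s1 IH] B; rewrite ?imset_id // cat_cons !imset_merges_cons IH.
Qed.

Fixpoint path_merges (x : V) (p : seq V) : seq (V * V) :=
  if p is y :: p' then (y, x) :: path_merges y p' else [::].

Lemma path_mergesP x p : path adj x p -> uniq (x :: p) ->
  [/\ merges (path_merges x p) x = last x p,
      merges (path_merges x p) (last x p) = last x p,
      all edge (path_merges x p) & size (path_merges x p) = size p].
Proof.
elim: p x => [|y p IH] x //= /andP[xy y_p] /andP[x_notin uniq_p].
have [y_last last_fixed edges ->] := IH y y_p uniq_p.
have last_neq_x : last y p != x.
  by apply/eqP => last_x; rewrite -last_x mem_last in x_notin.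
by rewrite /merge /= eqxx (negbTE last_neq_x) y_last last_fixed /edge /= adj_sym xy.
Qed.

Lemma merges_card_lt (B : {set V}) : (1 < #|B|)%N -> exists s,
  [/\ (size s < #|V|)%N, all edge s & (#|merges s @: B| < #|B|)%N].
Proof.
case/card_gt1P => [x [y [xB yB xy]]].
have /connectP [p xp y_last] := adj_conn x y; subst y.
case: (shortenP xp) yB xy => p' xp' uniq_p' _ yB xy.
have [x_last last_fixed edges size_p'] := path_mergesP xp' uniq_p'.
exists (path_merges x p'); split => //.
  by rewrite size_p'; have := max_card (mem (x :: p')); rewrite (card_uniqP uniq_p').
rewrite ltn_neqAle leq_imset_card andbT; apply: contraNneq xy => /eqP/imset_injP inj.
by apply/eqP/inj; rewrite // x_last last_fixed.
Qed.

Lemma merges_card_le1 (B : {set V}) : exists s,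
  [/\ (size s <= #|V| * #|B|)%N, all edge s & (#|merges s @: B| <= 1)%N].
Proof.
move: {2}#|B| (leqnn #|B|) => n; elim: n B => [|n IH] B B_le.
  by exists [::]; rewrite imset_id; split => //; lia.
case: (leqP #|B| 1) => [B_le1|B_gt1]; first by exists [::]; rewrite imset_id.
have [s1 [size_s1 edges_s1 card_s1]] := merges_card_lt B_gt1.
have [|s2 [size_s2 edges_s2 card_s2]] := IH (merges s1 @: B); first lia.
exists (s1 ++ s2); rewrite size_cat all_cat edges_s1 edges_s2 imset_merges_cat.
split => //; have := leq_mul (leqnn #|V|) card_s1; rewrite mulnS; lia.
Qed.

End MergePaths.

Section Coalescence.
Variables (R : realType) (V : finType) (adj : rel V) (q : V * V -> R) (c : R).
Hypotheses (adj_sym : symmetric adj) (adj_conn : forall x y : V, connect adj x y).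
Hypotheses (q_ge0 : forall p, 0 <= q p) (q_sum1 : \sum_p q p = 1).
Hypotheses (c_gt0 : 0 < c) (c_le1 : c <= 1).
Hypothesis q_edge_ge : forall p, adj p.1 p.2 -> c <= q p.

Lemma iter_dual_merges_le s g (B : {set V}) :
    (forall C, 0 <= g C <= 1) -> all (edge adj) s ->
  iter (size s) (dual q) g B <= 1 - c ^+ size s * (1 - g (merges s @: B)).
Proof.
move=> g01; elim: s B => [|p s IH] B /=; first by rewrite imset_id expr0 mul1r; lra.
case/andP => edge_p edges_s; set G := iter (size s) (dual q) g.
have G01 := iter_dual_bound q_ge0 q_sum1 (size s) g01.
have one_sub_dual : 1 - dual q G B = \sum_p' q p' * (1 - G (merge p' @: B)).
  by under [RHS]eq_bigr do rewrite mulrBr mulr1; rewrite sumrB q_sum1.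
have := IH (merge p @: B) edges_s; rewrite -imset_merges_cons -/G => IHp.
suff : c ^+ (size s).+1 * (1 - g (merges (p :: s) @: B)) <= 1 - dual q G B by lra.
rewrite one_sub_dual (bigD1 p) //= exprS -mulrA; apply: ler_wpDr.
  apply: sumr_ge0 => p' _; rewrite mulr_ge0 // subr_ge0.
  by case/andP: (G01 (merge p' @: B)).
apply: ler_pM; rewrite ?(ltW c_gt0) ?q_edge_ge //; last lra.
rewrite mulr_ge0 ?exprn_ge0 ?(ltW c_gt0) // subr_ge0.
by case/andP: (g01 (merges (p :: s) @: B)).
Qed.

Let M := (#|V| * #|V|)%N.
Let e := c ^+ M.

Lemma uncoal_contract B : uncoal q M B <= (1 - e) * many R B.
Proof.
rewrite /many; case: (leqP #|B| 1) => [B_le1|B_gt1].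
  have := uncoal_anti q_ge0 q_sum1 B (leq0n M).
  by rewrite /uncoal /= /many ltnNge B_le1 mulr0.
have [s [size_s edges_s card_s]] := merges_card_le1 adj_sym adj_conn B.
have size_le : (size s <= M)%N := leq_trans size_s (leq_mul (leqnn _) (max_card _)).
apply: le_trans (uncoal_anti q_ge0 q_sum1 B size_le) _.
apply: le_trans (iter_dual_merges_le B (fun C => bool01 _ _) edges_s) _.
rewrite /many ltnNge card_s /= subr0 !mulr1 lerD2l lerN2.
exact: ler_wiXn2l (ltW c_gt0) c_le1 _ _ size_le.
Qed.

Lemma uncoal_geom k B : uncoal q (k * M) B <= (1 - e) ^+ k.
Proof.
elim: k B => [|k IH] B.
  by rewrite expr0; case/andP: (uncoal_bound q_ge0 q_sum1 0 B).
rewrite mulSn addnC /uncoal iterD.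
apply: le_trans (iter_dual_le q_ge0 (k * M) uncoal_contract B) _.
rewrite iter_dualZ exprS; apply: ler_wpM2l; last exact: IH.
by rewrite subr_ge0 exprn_ile1 // ltW.
Qed.

Lemma uncoal_cvg0 B : (uncoal q n B @[n --> \oo] --> 0)%classic.
Proof.
apply/cvgr0Pnorm_lt => eps eps_gt0.
have e_gt0 : 0 < e := exprn_gt0 _ c_gt0.
have e_le1 : e <= 1 by rewrite exprn_ile1 // ltW.
have : `|1 - e| < 1 by rewrite ger0_norm; lra.
move=> /cvg_expr/cvgr0Pnorm_lt/(_ eps eps_gt0) [k0 _ geom_small].
exists (k0 * M)%N => // n /= n_ge.
rewrite ger0_norm; last by case/andP: (uncoal_bound q_ge0 q_sum1 n B).
apply: le_lt_trans (uncoal_anti q_ge0 q_sum1 B n_ge) _.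
apply: le_lt_trans (uncoal_geom k0 B) _.
by apply: le_lt_trans (ler_norm _) _; apply: geom_small => /=.
Qed.

End Coalescence.

Section NeutralMoran.
Variables (R : realType) (V : finType) (adj : rel V).
Hypotheses (adj_sym : symmetric adj) (adj_conn : forall x y : V, connect adj x y).
Hypothesis card_V_ge2 : (2 <= #|V|)%N.
Variable lam : R.
Hypotheses (lam_ge0 : 0 <= lam) (lam_le1 : lam <= 1).

Let N : R := #|V|%:R.
Let dg (u : V) : R := (deg adj u)%:R.

(* Probability that one step with r = 1 makes v copy u: Birth-death picks u,
   then v, with probability 1/(N deg u); death-Birth picks v, then u, with
   probability 1/(N deg v). *)
Definition copy_prob (p : V * V) : R :=
  (adj p.1 p.2)%:R * (lam / (N * dg p.1) + (1 - lam) / (N * dg p.2)).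

Lemma N_gt0 : 0 < N.
Proof. by rewrite ltr0n ltnW. Qed.

Lemma deg_gt0 u : (0 < deg adj u)%N.
Proof.
have [v v_neq_u] : exists v, v != u.
  have /card_gt1P [a [b [_ _ a_neq_b]]] : (1 < #|V|)%N by [].
  by case: (eqVneq a u) => [<-|]; [exists b; rewrite eq_sym | exists a].
have /connectP [[|w p] /= u_path v_last] := adj_conn u v.
  by rewrite v_last eqxx in v_neq_u.
by rewrite card_gt0; apply/set0Pn; exists w; rewrite inE; case/andP: u_path.
Qed.

Lemma dg_gt0 u : 0 < dg u.
Proof. by rewrite ltr0n deg_gt0. Qed.

Lemma sum_nbr u (F : V -> R) : \sum_v (adj u v)%:R * F v = \sum_(v in nbr adj u) F v.
Proof.
rewrite [RHS]big_mkcond; apply: eq_bigr => v _.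
by rewrite inE; case: (adj u v); rewrite ?mul1r ?mul0r.
Qed.

Lemma copy_prob_ge0 p : 0 <= copy_prob p.
Proof.
have NdgP u : 0 <= N * dg u := mulr_ge0 (ler0n _ _) (ler0n _ _).
by rewrite mulr_ge0 ?addr_ge0 ?divr_ge0 ?subr_ge0 ?NdgP.
Qed.

Lemma copy_prob_sum1 : \sum_p copy_prob p = 1.
Proof.
have nbr_avg c u : \sum_v (adj u v)%:R * (c / (N * dg u)) = c / N.
  rewrite sum_nbr sumr_const -mulr_natr invfM mulrA divfK //.
  exact: lt0r_neq0 (dg_gt0 u).
rewrite -(pair_bigA _ (fun u v => copy_prob (u, v))) /copy_prob /=.
under eq_bigr do (under eq_bigr do rewrite mulrDr; rewrite big_split /=).
rewrite big_split /= [X in _ + X]exchange_big /=.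
under eq_bigr do rewrite nbr_avg.
under [X in _ + X]eq_bigr => v _.
  rewrite (eq_bigr (fun u => (adj v u)%:R * ((1 - lam) / (N * dg v)))).
    by rewrite nbr_avg; over.
  by move=> u _; rewrite adj_sym.
rewrite !sumr_const -mulrnDl -mulrDl addrC subrK mul1r -mulr_natr mulVf //.
exact: lt0r_neq0 N_gt0.
Qed.

Lemma copy_prob_edge_ge p : adj p.1 p.2 -> (N * N)^-1 <= copy_prob p.
Proof.
move=> edge_p; rewrite /copy_prob edge_p mul1r.
have inv_ge u : (N * N)^-1 <= (N * dg u)^-1.
  rewrite lef_pV2 ?posrE ?mulr_gt0 ?N_gt0 ?dg_gt0 // ler_pM2l ?N_gt0 //.
  by rewrite ler_nat /deg max_card.
rewrite [leLHS](_ : _ = lam * (N * N)^-1 + (1 - lam) * (N * N)^-1); last by ring.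
by apply: lerD; apply: ler_wpM2l; rewrite ?subr_ge0 ?inv_ge.
Qed.

Lemma copy_prob_uncoal_cvg0 : (uncoal copy_prob n [set: V] @[n --> \oo] --> 0)%classic.
Proof.
have NN_gt0 : 0 < N * N by rewrite mulr_gt0 ?N_gt0.
apply: (uncoal_cvg0 adj_sym adj_conn copy_prob_ge0 copy_prob_sum1 _ _ copy_prob_edge_ge).
  by rewrite invr_gt0.
by rewrite invf_le1 // -[1]mulr1 ler_pM // ler1n; lia.
Qed.

Lemma repl_preimage (S : {set V}) u v : repl S u v = merge (u, v) @^-1: S.
Proof.
apply/setP => x; rewrite /repl !inE /merge /=.
case: (eqVneq x v) => [->|/negbTE x_neq_v].
  by case: (u \in S); rewrite !inE eqxx.
by case: (u \in S); rewrite !inE x_neq_v.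
Qed.

Lemma trans_neutral (S T : {set V}) :
  trans adj lam 1 S T = \sum_p copy_prob p * (repl S p.1 p.2 == T)%:R.
Proof.
have fit1 x : fit 1 S x = 1 :> R by rewrite /fit if_same.
have fit_sum : \sum_x fit 1 S x = N.
  by rewrite (eq_bigr (fun _ => 1)) ?sumr_const // => x _; rewrite fit1.
have fit_sum_nbr v : \sum_(w in nbr adj v) fit 1 S w = dg v.
  by rewrite (eq_bigr (fun _ => 1)) ?sumr_const // => x _; rewrite fit1.
have bd : lam * bd_prob adj 1 S T =
    \sum_u \sum_v (adj u v)%:R * (lam / (N * dg u)) * (repl S u v == T)%:R.
  rewrite /bd_prob mulr_sumr; apply: eq_bigr => u _.
  rewrite -sum_nbr mulr_sumr; apply: eq_bigr => v _.
  by rewrite fit1 fit_sum invfM /dg; ring.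
have db : (1 - lam) * db_prob adj 1 S T =
    \sum_u \sum_v (adj u v)%:R * ((1 - lam) / (N * dg v)) * (repl S u v == T)%:R.
  rewrite /db_prob mulr_sumr [RHS]exchange_big /=; apply: eq_bigr => v _.
  rewrite mulr_sumr -sum_nbr; apply: eq_bigr => u _.
  by rewrite fit1 fit_sum_nbr invfM adj_sym /dg; ring.
rewrite /trans bd db -big_split /=; under eq_bigr do rewrite -big_split /=.
by rewrite pair_bigA; apply: eq_bigr => p _; rewrite /copy_prob; ring.
Qed.

Lemma hit_setT k : hit adj lam 1 k [set: V] = 1.
Proof. by case: k => [|k] /=; rewrite eqxx. Qed.

Lemma hit_step k S :
  hit adj lam 1 k.+1 S = \sum_p copy_prob p * hit adj lam 1 k (repl S p.1 p.2).
Proof.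
have [->|S_neq_T] := eqVneq S [set: V].
  rewrite hit_setT -[LHS]copy_prob_sum1 /repl.
  by under [RHS]eq_bigr do rewrite in_setT setUT hit_setT mulr1.
rewrite /= (negbTE S_neq_T); under eq_bigr do rewrite trans_neutral mulr_suml.
rewrite exchange_big /=; apply: eq_bigr => p _.
rewrite (bigD1 (repl S p.1 p.2)) //= eqxx mulr1 big1 ?addr0 // => T.
by rewrite eq_sym => /negbTE ->; rewrite mulr0 mul0r.
Qed.

Lemma hit_dual k S :
  hit adj lam 1 k S = iter k (dual copy_prob) (fun B => (B \subset S)%:R) [set: V].
Proof.
elim: k S => [|k IH] S; first by rewrite /= subTset; case: eqP.
rewrite hit_step iter_dual_subset_step.
by apply: eq_bigr => p _; rewrite IH repl_preimage.
Qed.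

Lemma hit_bound k S : 0 <= hit adj lam 1 k S <= 1.
Proof.
rewrite hit_dual; apply: (iter_dual_bound copy_prob_ge0 copy_prob_sum1) => B.
exact: bool01.
Qed.

Lemma hit_leS k S : hit adj lam 1 k S <= hit adj lam 1 k.+1 S.
Proof.
elim: k S => [|k IH] S.
  have [->|S_neq_T] := eqVneq S [set: V]; first by rewrite !hit_setT.
  by rewrite [leLHS]/= (negbTE S_neq_T); case/andP: (hit_bound 1 S).
rewrite [leRHS]hit_step [leLHS]hit_step; apply: ler_sum => p _.
by apply: ler_wpM2l; [exact: copy_prob_ge0 | exact: IH].
Qed.

Lemma hit_cvg S : cvgn (fun k => hit adj lam 1 k S).
Proof.
apply: nondecreasing_is_cvgn; first by apply/nondecreasing_seqP => k; exact: hit_leS.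
by exists 1 => _ [k _ <-]; case/andP: (hit_bound k S).
Qed.

End NeutralMoran.

Theorem mainTheorem1 (R : realType) (V : finType) (adj : rel V)
  (adj_sym : symmetric adj) (adj_irr : irreflexive adj)
  (adj_conn : forall x y : V, connect adj x y)
  (hn : (2 <= #|V|)%N)
  (lam : R) (hlam0 : 0 <= lam) (hlam1 : lam <= 1)
  (S : {set V}) :
  fp adj lam 1 S = \sum_(u in S) fp adj lam 1 [set u].
Proof.
pose excess n := hit adj lam 1 n S - \sum_(u in S) hit adj lam 1 n [set u].
have hit_iter := hit_dual adj_sym adj_conn hn lam.
apply: (@limn_sum_add_vanishing _ _ _ _ excess) => [n||u].
- by rewrite subrK.
- have uncoal0 := copy_prob_uncoal_cvg0 adj_sym adj_conn hn hlam0 hlam1.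
  apply: (squeeze_cvgr _ (cvg_cst 0) uncoal0).
  apply: nearW => n; rewrite /excess hit_iter; under eq_bigr do rewrite hit_iter.
  apply: iter_dual_subset_excess; first exact: copy_prob_ge0.
  by rewrite -card_gt0 cardsT; lia.
- exact: hit_cvg.
Qed.
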